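(* Let $\mathscr{A}=\{a,b\}$, let $S$ be the Fibonacci substitution $a\mapsto ab$, $b\mapsto a$, and let $\Xi$ be the associated Fibonacci subshift. For $k\in\mathbb{N}$ let $\eta^a_k=(S^k(a))^\infty$ and $\eta^b_k=(S^k(b))^\infty$ and let $\Xi^a_k=\mathrm{Orb}(\eta^a_k)$, $\Xi^b_k=\mathrm{Orb}(\eta^b_k)$. Then $\Xi$ is periodically approximable and both sequences $(\Xi^a_k)_k$ and $(\Xi^b_k)_k$ converge to $\Xi$ in the Hausdorff topology.
   Context: $S$ extends to finite words as a homomorphism for concatenation. The Fibonacci subshift is $\Xi=\{\xi\in\mathscr{A}^{\mathbb{Z}}:\text{every finite subword of }\xi\text{ is a subword of some }S^n(c),\ n\in\mathbb{N},\ c\in\mathscr{A}\}$. For a finite word $u$, $u^\infty$ is the two-sided periodic sequence repeating $u$. $\mathscr{A}^{\mathbb{Z}}$ has the product topology and shift $(T\xi)(j)=\xi(j-1)$, $\mathrm{Orb}(\eta)=\{T^n\eta:n\in\mathbb{Z}\}$. Subshifts (non-empty closed $T$-invariant subsets) carry the Hausdorff (Vietoris) topology (basis: $\{\Xi:\Xi\cap F=\emptyset,\Xi\cap O\neq\emptyset\ \forall O\in\mathcal{F}\}$, $F$ closed, $\mathcal{F}$ a finite family of open sets). Periodically approximable means being a limit of subshifts $\mathrm{Orb}(\eta)$ with $\eta$ periodic. *)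

From Stdlib Require Import ZArith List.
Import ListNotations.
Open Scope Z_scope.

Inductive letter : Type := a | b.

Definition config := Z -> letter.

Definition S (c : letter) : list letter :=
  match c with a => [a; b] | b => [a] end.
Definition Sw (w : list letter) : list letter := flat_map S w.
Definition Sn (n : nat) (w : list letter) : list letter := Nat.iter n Sw w.

Definition subword (u w : list letter) : Prop :=
  exists p s, w = p ++ u ++ s.

Definition factor (xi : config) (i : Z) (n : nat) : list letter :=
  map (fun j => xi (i + Z.of_nat j)) (seq 0 n).

Definition Xi (xi : config) : Prop :=
  forall (i : Z) (n : nat),
    exists (m : nat) (c : letter), subword (factor xi i n) (Sn m [c]).

(* u^oo : the two-sided periodic sequence repeating u (u(0) sits at 0). *)
Definition per (u : list letter) : config :=
  fun j => nth (Z.to_nat (j mod Z.of_nat (length u))) u a.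

Definition T (xi : config) : config := fun j => xi (j - 1).
Definition Tpow (n : Z) (xi : config) : config := fun j => xi (j - n).

Definition Orb (eta : config) : config -> Prop :=
  fun xi => exists n : Z, xi = Tpow n eta.

Definition periodic (eta : config) : Prop :=
  exists p : Z, 0 < p /\ forall j, eta (j + p) = eta j.

(* Product topology on A^Z (A discrete): O is open iff every point of O
   has a cylinder neighbourhood (agreement on [-n,n]) inside O. *)
Definition is_open (O : config -> Prop) : Prop :=
  forall xi, O xi -> exists n : nat,
    forall eta, (forall j, Z.abs j <= Z.of_nat n -> eta j = xi j) -> O eta.
Definition is_closed (F : config -> Prop) : Prop :=
  is_open (fun xi => ~ F xi).

Definition vietoris_basic (F : config -> Prop) (Fam : list (config -> Prop))
  (Y : config -> Prop) : Prop :=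
  (forall xi, Y xi -> ~ F xi) /\
  (forall O, In O Fam -> exists xi, Y xi /\ O xi).

(* Convergence of a sequence of subshifts in the Hausdorff (Vietoris)
   topology: every basic open neighbourhood of the limit eventually
   contains the sequence. *)
Definition vietoris_converges (Xs : nat -> config -> Prop) (X : config -> Prop)
  : Prop :=
  forall (F : config -> Prop) (Fam : list (config -> Prop)),
    is_closed F -> (forall O, In O Fam -> is_open O) ->
    vietoris_basic F Fam X ->
    exists N : nat, forall k : nat, (N <= k)%nat -> vietoris_basic F Fam (Xs k).

Definition periodically_approximable (X : config -> Prop) : Prop :=
  exists eta : nat -> config,
    (forall k, periodic (eta k)) /\ vietoris_converges (fun k => Orb (eta k)) X.

Definition eta_a (k : nat) : config := per (Sn k [a]).
Definition eta_b (k : nat) : config := per (Sn k [b]).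

(* A legal word of the Fibonacci language occurs in S^k(a) for all large k, since S^k(a) is a
   prefix of S^(k+1)(a) and contains S^(k-1)(b); so every cylinder around a point of Xi is
   eventually met by the orbit of (S^k(a))^oo. Conversely S^k(a) S^k(a) is legal (it occurs in
   S^k(abaab) = S^(k+3)(a)), so every window of length |S^k(a)| of a point of that orbit is legal.
   By compactness of {a,b}^Z, a closed set disjoint from Xi already avoids every point whose
   central window of some fixed radius is legal, hence avoids the orbit for k large. The case of b
   reduces to that of a because S^(k+1)(b) = S^k(a). *)

From Stdlib Require Import ZArith List Lia Classical ClassicalEpsilon.
Import ListNotations.
Open Scope Z_scope.

Definition legal (w : list letter) : Prop := exists m c, subword w (Sn m [c]).

Lemma subword_refl u : subword u u.
Proof. exists [], []. now rewrite app_nil_r. Qed.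

Lemma subword_trans u v w : subword u v -> subword v w -> subword u w.
Proof.
  intros [p [s ->]] [p' [s' ->]].
  exists (p' ++ p), (s ++ s'). now rewrite !app_assoc.
Qed.

Lemma legal_subword u v : subword u v -> legal v -> legal u.
Proof. intros Huv [m [c Hv]]. exists m, c. eapply subword_trans; eauto. Qed.

Lemma Sn_app k u v : Sn k (u ++ v) = Sn k u ++ Sn k v.
Proof.
  induction k as [|k IH]; [reflexivity|].
  change (Sw (Sn k (u ++ v)) = Sw (Sn k u) ++ Sw (Sn k v)).
  rewrite IH. apply flat_map_app.
Qed.

Lemma Sn_add k m w : Sn (k + m) w = Sn k (Sn m w).
Proof. apply Nat.iter_add. Qed.

Lemma Sn_succ_r m w : Sn (Datatypes.S m) w = Sn m (Sw w).
Proof. rewrite <- Nat.add_1_r. apply Sn_add. Qed.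

Lemma subword_Sn k u v : subword u v -> subword (Sn k u) (Sn k v).
Proof. intros [p [s ->]]. exists (Sn k p), (Sn k s). now rewrite !Sn_app. Qed.

Lemma subword_Sn_letter_Sn_succ_a m c : subword (Sn m [c]) (Sn (Datatypes.S m) [a]).
Proof.
  rewrite Sn_succ_r. change (Sw [a]) with ([a] ++ [b]). rewrite Sn_app.
  destruct c.
  - now exists [], (Sn m [b]).
  - exists (Sn m [a]), []. now rewrite app_nil_r.
Qed.

Lemma subword_Sn_a_mono m k : (m <= k)%nat -> subword (Sn m [a]) (Sn k [a]).
Proof.
  induction 1; [apply subword_refl|].
  eapply subword_trans; [eassumption|apply subword_Sn_letter_Sn_succ_a].
Qed.

Lemma legal_subword_Sn_a w :
  legal w -> exists N, forall k, (N <= k)%nat -> subword w (Sn k [a]).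
Proof.
  intros [m [c Hw]]. exists (Datatypes.S m). intros k Hk.
  eapply subword_trans; [exact Hw|].
  eapply subword_trans; [apply subword_Sn_letter_Sn_succ_a|now apply subword_Sn_a_mono].
Qed.

Lemma length_Sn_ge k w : (length w <= length (Sn k w))%nat.
Proof.
  induction k as [|k IH]; [reflexivity|].
  change (length w <= length (Sw (Sn k w)))%nat.
  enough (forall v, (length v <= length (Sw v))%nat) by (etransitivity; eauto).
  induction v as [|[] v IHv]; simpl; lia.
Qed.

Lemma length_Sn_a k : (k + 1 <= length (Sn k [a]))%nat.
Proof.
  induction k as [|k IH]; [simpl; lia|].
  rewrite Sn_succ_r. change (Sw [a]) with ([a] ++ [b]).
  rewrite Sn_app, length_app. pose proof (length_Sn_ge k [b]). simpl in *. lia.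
Qed.

Lemma legal_Sn_a_square k : legal (Sn k [a] ++ Sn k [a]).
Proof.
  exists (k + 3)%nat, a. rewrite Sn_add, <- Sn_app.
  apply subword_Sn. now exists [a; b], [b].
Qed.

Lemma factor_length x i n : length (factor x i n) = n.
Proof. unfold factor. now rewrite length_map, length_seq. Qed.

Lemma factor_nth x i n k d :
  (k < n)%nat -> nth k (factor x i n) d = x (i + Z.of_nat k).
Proof.
  intros Hk. unfold factor.
  rewrite nth_indep with (d' := x (i + Z.of_nat 0)) by (rewrite length_map, length_seq; lia).
  now rewrite (map_nth (fun j => x (i + Z.of_nat j))), seq_nth by lia.
Qed.

Lemma factor_app x i p q :
  factor x i (p + q) = factor x i p ++ factor x (i + Z.of_nat p) q.
Proof.
  apply nth_ext with (d := a) (d' := a).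
  { now rewrite length_app, !factor_length. }
  intros k Hk. rewrite factor_length in Hk. rewrite factor_nth by exact Hk.
  destruct (Nat.lt_ge_cases k p).
  - now rewrite app_nth1, factor_nth by (rewrite ?factor_length; lia).
  - rewrite app_nth2, factor_nth; rewrite ?factor_length; try lia. f_equal. lia.
Qed.

Lemma factor_subword x i n i' n' :
  i <= i' -> i' + Z.of_nat n' <= i + Z.of_nat n ->
  subword (factor x i' n') (factor x i n).
Proof.
  intros H1 H2. set (d := Z.to_nat (i' - i)).
  replace n with (d + (n' + (n - d - n')))%nat by lia.
  rewrite factor_app, factor_app.
  replace (i + Z.of_nat d) with i' by lia. eexists _, _. reflexivity.
Qed.

Lemma factor_ext x y i n :
  (forall k, (k < n)%nat -> x (i + Z.of_nat k) = y (i + Z.of_nat k)) ->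
  factor x i n = factor y i n.
Proof.
  intros H. apply map_ext_in. intros k Hk. apply in_seq in Hk. apply H. lia.
Qed.

Lemma factor_Tpow t x i n : factor (Tpow t x) i n = factor x (i - t) n.
Proof. apply map_ext. intros j. unfold Tpow. f_equal. lia. Qed.

Lemma per_periodic u : (0 < length u)%nat -> periodic (per u).
Proof.
  intros Hu. exists (Z.of_nat (length u)). split; [lia|]. intros j. unfold per.
  rewrite <- (Z.mod_add j 1) by lia. now rewrite Z.mul_1_l.
Qed.

Lemma factor_per_subword u i m :
  (0 < m)%nat -> (m <= length u)%nat -> subword (factor (per u) i m) (u ++ u).
Proof.
  intros Hm Hmu. set (L := Z.of_nat (length u)).
  pose proof (Z.mod_pos_bound i L ltac:(lia)) as Hq.
  set (q := Z.to_nat (i mod L)).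
  assert (Hfac : factor (per u) i m = firstn m (skipn q (u ++ u))).
  { apply nth_ext with (d := a) (d' := a).
    { rewrite factor_length, length_firstn, length_skipn, length_app. lia. }
    intros k Hk. rewrite factor_length in Hk.
    rewrite factor_nth, nth_firstn, nth_skipn by lia.
    replace (k <? m)%nat with true by (symmetry; now apply Nat.ltb_lt).
    unfold per. fold L. rewrite <- Z.add_mod_idemp_l by lia.
    destruct (Nat.lt_ge_cases (q + k) (length u)).
    - rewrite app_nth1 by lia. f_equal. rewrite Z.mod_small by lia. lia.
    - rewrite app_nth2 by lia. f_equal.
      rewrite <- (Z.mod_add _ (-1) L), Z.mod_small by lia. lia. }
  rewrite Hfac. exists (firstn q (u ++ u)), (skipn m (skipn q (u ++ u))).
  now rewrite !firstn_skipn.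
Qed.

Lemma Tpow_per_agree u p s x i m j :
  u = p ++ factor x i m ++ s -> i <= j < i + Z.of_nat m ->
  Tpow (i - Z.of_nat (length p)) (per u) j = x j.
Proof.
  intros Hu Hj.
  assert (Hlen : length u = (length p + m + length s)%nat)
    by (rewrite Hu, !length_app, factor_length; lia).
  unfold Tpow, per. rewrite Z.mod_small by lia.
  replace (Z.to_nat _) with (length p + Z.to_nat (j - i))%nat by lia.
  rewrite Hu, app_nth2, Nat.add_comm, Nat.add_sub, app_nth1 by (rewrite ?factor_length; lia).
  rewrite factor_nth by lia. f_equal. lia.
Qed.

Definition agree_on (n : nat) (x y : config) : Prop :=
  forall j, Z.abs j < Z.of_nat n -> x j = y j.

Definition inf_often (P : nat -> Prop) : Prop :=
  forall N, exists L, (N <= L)%nat /\ P L.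

Lemma inf_often_letter (P : nat -> Prop) (f : nat -> letter) :
  inf_often P -> exists c, inf_often (fun L => P L /\ f L = c).
Proof.
  intros HP. apply NNPP. intros Hno.
  assert (Hfin : forall c, exists N, forall L, (N <= L)%nat -> P L -> f L <> c).
  { intros c. apply NNPP. intros Hc. apply Hno. exists c. intros N.
    apply NNPP. intros HN. apply Hc. exists N. intros L HL PL E. apply HN. now exists L. }
  destruct (Hfin a) as [Na Ha], (Hfin b) as [Nb Hb].
  destruct (HP (Na + Nb)%nat) as [L [HL PL]].
  destruct (f L) eqn:E; [apply (Ha L) | apply (Hb L)]; auto; lia.
Qed.

Section ClusterPoint.

Variable xs : nat -> config.

Definition cluster (n : nat) (g : config) : Prop :=
  inf_often (fun L => agree_on n (xs L) g).

Definition extend (n : nat) (g : config) (c1 c2 : letter) : config :=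
  fun j => if Z.abs j <? Z.of_nat n then g j else if j <? 0 then c1 else c2.

Lemma cluster_extend n g :
  cluster n g -> exists g', cluster (Datatypes.S n) g' /\ agree_on n g' g.
Proof.
  intros Hg.
  destruct (inf_often_letter _ (fun L => xs L (- Z.of_nat n)) Hg) as [c1 H1].
  destruct (inf_often_letter _ (fun L => xs L (Z.of_nat n)) H1) as [c2 H2].
  exists (extend n g c1 c2). split.
  - intros N. destruct (H2 N) as [L [HL [[Hag E1] E2]]]. exists L. split; [exact HL|].
    intros j Hj. unfold extend.
    destruct (Z.ltb_spec (Z.abs j) (Z.of_nat n)); [now apply Hag|].
    destruct (Z.ltb_spec j 0).
    + now replace j with (- Z.of_nat n) by lia.
    + now replace j with (Z.of_nat n) by lia.
  - intros j Hj. unfold extend. destruct (Z.ltb_spec (Z.abs j) (Z.of_nat n)); [reflexivity|lia].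
Qed.

Definition next (n : nat) (g : config) : config :=
  epsilon (inhabits g) (fun g' => cluster (Datatypes.S n) g' /\ agree_on n g' g).

Lemma next_spec n g :
  cluster n g -> cluster (Datatypes.S n) (next n g) /\ agree_on n (next n g) g.
Proof. intros Hg. exact (epsilon_spec _ _ (cluster_extend n g Hg)). Qed.

Fixpoint approx (n : nat) : config :=
  match n with
  | O => fun _ => a
  | Datatypes.S m => next m (approx m)
  end.

Lemma approx_cluster n : cluster n (approx n).
Proof.
  induction n as [|n IH].
  - intros N. exists N. split; [lia|]. intros j Hj. lia.
  - exact (proj1 (next_spec n _ IH)).
Qed.

Lemma approx_agree k m : (k <= m)%nat -> agree_on k (approx m) (approx k).
Proof.
  induction 1 as [|m Hkm IH]; intros j Hj; [reflexivity|].
  simpl. rewrite (proj2 (next_spec m _ (approx_cluster m))) by lia. auto.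
Qed.

Definition limit : config := fun j => approx (Datatypes.S (Z.to_nat (Z.abs j))) j.

Lemma limit_cluster n : cluster n limit.
Proof.
  intros N. destruct (approx_cluster n N) as [L [HL Hag]]. exists L. split; [exact HL|].
  intros j Hj. rewrite Hag by exact Hj. unfold limit. apply approx_agree; lia.
Qed.

End ClusterPoint.

Lemma config_cluster_point (xs : nat -> config) :
  exists x, forall n, inf_often (fun L => agree_on n (xs L) x).
Proof. exists (limit xs). apply limit_cluster. Qed.

Definition window (x : config) (n : nat) : list letter :=
  factor x (- Z.of_nat n) (2 * n + 1).

Lemma window_subword x m n : (m <= n)%nat -> subword (window x m) (window x n).
Proof. intros Hmn. apply factor_subword; lia. Qed.

Lemma window_agree x y n : agree_on (Datatypes.S n) x y -> window x n = window y n.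
Proof. intros Hxy. apply factor_ext. intros k Hk. apply Hxy. lia. Qed.

Lemma Xi_windows x : (forall n, legal (window x n)) -> Xi x.
Proof.
  intros Hx i n. destruct (Hx (Z.to_nat (Z.abs i) + n)%nat) as [m [c Hm]]. exists m, c.
  eapply subword_trans; [|exact Hm]. apply factor_subword; lia.
Qed.

Lemma closed_avoiding_Xi_window (F : config -> Prop) :
  is_closed F -> (forall x, Xi x -> ~ F x) ->
  exists L, forall x, legal (window x L) -> ~ F x.
Proof.
  intros HF HX. apply NNPP. intros Hno.
  assert (Hbad : forall L, exists x, legal (window x L) /\ F x).
  { intros L. apply NNPP. intros H. apply Hno. exists L. intros x Hx Fx. apply H. eauto. }
  destruct (choice _ Hbad) as [xs Hxs].
  destruct (config_cluster_point xs) as [x Hx].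
  assert (Fx : F x).
  { apply NNPP. intros nFx. destruct (HF x nFx) as [n Hn].
    destruct (Hx (Datatypes.S n) 0%nat) as [L [_ HL]].
    apply (Hn (xs L)); [intros j Hj; apply HL; lia | apply Hxs]. }
  apply (HX x); [|exact Fx]. apply Xi_windows. intros n.
  destruct (Hx (Datatypes.S n) n) as [L [HnL HL]].
  rewrite <- (window_agree _ _ _ HL).
  eapply legal_subword; [apply window_subword, HnL | apply Hxs].
Qed.

Lemma orbit_per_window_legal u t L :
  legal (u ++ u) -> (2 * L + 1 <= length u)%nat -> legal (window (Tpow t (per u)) L).
Proof.
  intros Hu Hlen. unfold window. rewrite factor_Tpow.
  eapply legal_subword; [apply factor_per_subword; lia | exact Hu].
Qed.

Lemma orbit_eta_a_meets_open (O : config -> Prop) x :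
  is_open O -> O x -> Xi x ->
  exists N, forall k, (N <= k)%nat -> exists y, Orb (eta_a k) y /\ O y.
Proof.
  intros HO Ox Xx. destruct (HO x Ox) as [n Hn].
  destruct (legal_subword_Sn_a (window x n) (Xx _ _)) as [N HN].
  exists N. intros k Hk. destruct (HN k Hk) as [p [s Hu]].
  eexists. split; [eexists; reflexivity|].
  apply Hn. intros j Hj. unfold eta_a. apply (Tpow_per_agree _ _ _ _ _ _ _ Hu). lia.
Qed.

Lemma eventually_forall_list {A : Type} (P : nat -> A -> Prop) (l : list A) :
  (forall y, In y l -> exists N, forall k, (N <= k)%nat -> P k y) ->
  exists N, forall k, (N <= k)%nat -> forall y, In y l -> P k y.
Proof.
  induction l as [|y0 l IH]; intros H.
  - exists 0%nat. intros k _ y [].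
  - destruct (H y0 (or_introl eq_refl)) as [N0 H0].
    destruct IH as [N1 H1]; [intros y Hy; apply H; now right|].
    exists (N0 + N1)%nat. intros k Hk y [<-|Hy]; [apply H0 | apply H1]; auto; lia.
Qed.

Lemma vietoris_converges_shift (Xs Ys : nat -> config -> Prop) (X : config -> Prop) :
  (forall k, Ys (Datatypes.S k) = Xs k) -> vietoris_converges Xs X -> vietoris_converges Ys X.
Proof.
  intros HYs Hconv F Fam HF HFam HX. destruct (Hconv F Fam HF HFam HX) as [N HN].
  exists (Datatypes.S N). intros [|k] Hk; [lia|]. rewrite HYs. apply HN. lia.
Qed.

Lemma eta_a_converges : vietoris_converges (fun k => Orb (eta_a k)) Xi.
Proof.
  intros F Fam HF HFam [HXF HXFam].
  destruct (closed_avoiding_Xi_window F HF HXF) as [L HL].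
  destruct (eventually_forall_list (fun k O => exists y, Orb (eta_a k) y /\ O y) Fam)
    as [N HN].
  { intros O HOin. destruct (HXFam O HOin) as [x [Xx Ox]].
    exact (orbit_eta_a_meets_open O x (HFam O HOin) Ox Xx). }
  exists (2 * L + N)%nat. intros k Hk. split.
  - intros y [t ->]. apply HL, orbit_per_window_legal; [apply legal_Sn_a_square|].
    pose proof (length_Sn_a k). lia.
  - intros O HOin. apply HN; [lia|exact HOin].
Qed.

Lemma eta_a_periodic k : periodic (eta_a k).
Proof. apply per_periodic. pose proof (length_Sn_a k). lia. Qed.

Lemma eta_b_succ k : eta_b (Datatypes.S k) = eta_a k.
Proof. unfold eta_b, eta_a. now rewrite Sn_succ_r. Qed.

Theorem proposition14 :
  periodically_approximable Xi /\
  vietoris_converges (fun k => Orb (eta_a k)) Xi /\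
  vietoris_converges (fun k => Orb (eta_b k)) Xi.
Proof.
  split; [|split].
  - exists eta_a. split; [exact eta_a_periodic | exact eta_a_converges].
  - exact eta_a_converges.
  - apply (vietoris_converges_shift (fun k => Orb (eta_a k))); [|exact eta_a_converges].
    intros k. now rewrite eta_b_succ.
Qed.
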